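(* Let $(\mathcal S,\mathcal F,\mu,\prec)$ be an ordered probability space and let $g(x)=\mu\{z\in\mathcal S:z\prec x\}$. Then the set $\{(x,y)\in\mathcal S^2:x\prec y\text{ and }g(x)\ge g(y)\}$ is a $\mu\times\mu$-null set in $\mathcal S^2$.
   Context: An ordered probability space $(\mathcal S,\mathcal F,\mu,\prec)$ is a probability space $(\mathcal S,\mathcal F,\mu)$ equipped with a strict partial order $\prec$ on $\mathcal S$ such that $\{(x,y):x\prec y\}$ belongs to the product $\sigma$-field $\mathcal F\times\mathcal F$. *)

From HB Require Import structures.
From mathcomp Require Import all_boot all_order all_algebra.
From mathcomp Require Import all_classical all_reals all_analysis.

Set Implicit Arguments.
Unset Strict Implicit.
Unset Printing Implicit Defensive.

Import Order.TTheory GRing.Theory Num.Theory.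
Local Open Scope classical_set_scope.
Local Open Scope ring_scope.

Definition strict_partial_order (T : Type) (lt : T -> T -> Prop) : Prop :=
  (forall x, ~ lt x x) /\ (forall x y z, lt x y -> lt y z -> lt x z).

(* Fix y and let A = {x | x < y, g(y) <= g(x)}.  For x in A, the lower set of x
   is contained in that of y and has at least the same measure, so almost every
   point of A lies below x.  Hence, by Fubini, almost every pair of A x A lies
   in both < and >, which is impossible for an asymmetric relation unless
   mu(A)^2 = 0.  So every y-section of the bad set is null, and so is the set. *)
From HB Require Import structures.
From mathcomp Require Import all_boot all_order all_algebra.
From mathcomp Require Import all_classical all_reals all_analysis.
From mathcomp Require Import measurable_realfun.
Import Order.TTheory GRing.Theory Num.Theory.
Local Open Scope classical_set_scope.
Local Open Scope ring_scope.

Section product_measure_null_sections.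
Local Open Scope ereal_scope.
Context d1 d2 (T1 : measurableType d1) (T2 : measurableType d2) (R : realType).

Lemma product_measure_xsections0 (m1 : {measure set T1 -> \bar R})
    (m2 : set T2 -> \bar R) (A : set (T1 * T2)) :
  (forall x, m2 (xsection A x) = 0) -> (m1 \x m2) A = 0.
Proof. by move=> A0; apply: integral0_eq => x _ /=. Qed.

Lemma product_measure_ysections0 (m1 : {sigma_finite_measure set T1 -> \bar R})
    (m2 : {sigma_finite_measure set T2 -> \bar R}) (A : set (T1 * T2)) :
  measurable A -> (forall y, m1 (ysection A y) = 0) -> (m1 \x m2) A = 0.
Proof.
move=> mA A0; rewrite (product_measure_unique (m' := m1 \x^ m2)) //.
- by apply: integral0_eq => y _ /=.
- by move=> A1 A2 mA1 mA2; exact: product_measure2E.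
Qed.

End product_measure_null_sections.

Lemma subset_measureD0 {d} {T : measurableType d} {R : realType}
    (mu : {finite_measure set T -> \bar R}) {B C : set T} :
  measurable B -> measurable C -> B `<=` C -> (mu C <= mu B)%E ->
  mu (C `\` B) = 0.
Proof.
move=> mB mC BC CB; apply/eqP; rewrite -measure_le0.
rewrite measureD ?ltey_eq ?fin_num_measure // setIidr //.
by rewrite sube_le0.
Qed.

Section asymmetric_relation.
Context {d} {T : measurableType d} {R : realType}.
Variable mu : {sigma_finite_measure set T -> \bar R}.
Context {lt : T -> T -> Prop}.
Hypothesis mlt : measurable [set p : T * T | lt p.1 p.2].

Lemma ysection_lt x : ysection [set p : T * T | lt p.1 p.2] x = [set z | lt z x].
Proof. by apply/seteqP; split => z; rewrite /ysection /= in_setE. Qed.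

Lemma measurable_lower x : measurable [set z | lt z x].
Proof. by rewrite -ysection_lt; exact: measurable_ysection. Qed.

Lemma measurable_fun_measure_lower :
  measurable_fun [set: T] (fun x => mu [set z | lt z x]).
Proof.
have := measurable_fun_ysection mu mlt.
by congr measurable_fun; apply/funext => x /=; rewrite ysection_lt.
Qed.

Hypothesis lt_asym : forall x y, lt x y -> ~ lt y x.

(* In A x A, a.e. pair (x, z) has z < x (xsections) and x < z (ysections). *)
Lemma ae_below_measure0 (A : set T) : measurable A ->
  (forall x, A x -> mu (A `\` [set z | lt z x]) = 0) -> mu A = 0.
Proof.
move=> mA below.
have mgt : measurable [set p : T * T | lt p.2 p.1].
  by have := measurable_swap measurableT mlt; rewrite setTI.
pose P := A `*` A `\` [set p : T * T | lt p.2 p.1].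
pose Q := A `*` A `\` [set p : T * T | lt p.1 p.2].
have mP : measurable P by apply: measurableD => //; exact: measurableX.
have mQ : measurable Q by apply: measurableD => //; exact: measurableX.
have mAlower x : measurable (A `\` [set z | lt z x]).
  exact/measurableD/measurable_lower.
have P0 : (mu \x mu)%E P = 0.
  apply: product_measure_xsections0 => x.
  have mPx := measurable_xsection x mP.
  have [Ax|nAx] := pselect (A x).
  - apply: subset_measure0 (below x Ax) => // z /xsectionP[[_ Az] nzx].
    by split.
  - by apply: subset_measure0 (measure0 mu) => // z /xsectionP[[]].
have Q0 : (mu \x mu)%E Q = 0.
  apply: product_measure_ysections0 => // z.
  have mQz := measurable_ysection z mQ.
  have [Az|nAz] := pselect (A z).
  - apply: subset_measure0 (below z Az) => // x /ysectionP[[Ax _] nxz].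
    by split.
  - by apply: subset_measure0 (measure0 mu) => // x /ysectionP[[]].
have cover : A `*` A `<=` P `|` Q.
  move=> [x z] AAxz; have [zx|nzx] := pselect (lt z x).
  - by right; split => // /lt_asym.
  - by left.
have : (mu \x mu)%E (A `*` A) = 0.
  apply: subset_measure0 cover _; [exact: measurableX | exact: measurableU |].
  apply/eqP; rewrite -measure_le0.
  by apply: le_trans (measureU2 _ mP mQ) _; rewrite [leLHS]/= P0 Q0 adde0.
by rewrite product_measure1E // => /eqP; rewrite mule_eq0 orbb => /eqP.
Qed.

End asymmetric_relation.

Theorem lemma5p3 (d : measure_display) (T : measurableType d) (R : realType)
  (mu : probability T R) (lt : T -> T -> Prop)
  (hlt : strict_partial_order lt)
  (hmeas : measurable [set p : T * T | lt p.1 p.2]) :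
  let g := fun x : T => mu [set z | lt z x] in
  ((mu \x mu)%E).-negligible [set p : T * T | lt p.1 p.2 /\ (g p.2 <= g p.1)%E].
Proof.
move=> g; have [lt_irr lt_trans] := hlt.
have lt_asym x y : lt x y -> ~ lt y x by move=> xy /(lt_trans _ _ _ xy)/lt_irr.
have mlower := measurable_lower hmeas.
have mg : measurable_fun [set: T] g := measurable_fun_measure_lower mu hmeas.
set N := [set p | _ /\ _].
have mN : measurable N.
  apply: measurableI hmeas _.
  have := measurable_lee measurableT (measurableT_comp mg measurable_snd)
    (measurableT_comp mg measurable_fst).
  by rewrite setTI.
apply/negligibleP => //; apply: product_measure_ysections0 => // y.
apply: (ae_below_measure0 mu hmeas lt_asym) => [|x /ysectionP[xy gyx]].
  exact: measurable_ysection.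
have lower_xy : [set z | lt z x] `<=` [set z | lt z y].
  by move=> z zx; exact: lt_trans zx xy.
apply: subset_measure0 (subset_measureD0 mu (mlower x) (mlower y) lower_xy gyx).
- exact/measurableD/mlower/measurable_ysection.
- exact: measurableD.
- by move=> z [/ysectionP[]].
Qed.
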